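(* Let $\mathcal T$ be a set of at least two binary trees over $L$, let $\mathcal F=\{C_1,\dots,C_k\}$ be an acyclic agreement forest for $\mathcal T$ indexed so that $(C_1,\dots,C_k)$ is a topological ordering of $G(\mathcal T,\mathcal F)$, and let $\sigma$ be a leaf ordering such that for all $i<j$, every $l\in L(C_i)\setminus\{\rho\}$ satisfies $\sigma(l)<\sigma(l')$ for every $l'\in L(C_j)\setminus\{\rho\}$. Fix $i$ with $L(C_i)\setminus\{\rho\}\ne\emptyset$, let $l_s$ be the $\sigma$-first leaf of $L(C_i)\setminus\{\rho\}$, and let $l_j\in L(C_i)$ with $j\ge s$. Then for every $T\in\mathcal T$ there is a vertex $x$ of $T^j$ such that the subtree $(T^j)_x$ is (label-preservingly) isomorphic to $C_i|_{\{l_s,\dots,l_j\}\cap L(C_i)}$, and the vertices of these subtrees are indexed identically across $\mathcal T$: if $T,T'\in\mathcal T$ with corresponding vertices $x,x'$, and $v\in V((T^j)_x)$, $v'\in V((T'^j)_{x'})$ satisfy $L((T^j)_v)=L((T'^j)_{v'})$, then $\sigma(v)=\sigma(v')$ (indices computed in $T^j$ and $T'^j$ respectively).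
   Context: Trees. Fix a finite label set $L$ containing a distinguished label $\rho$, and let $n=|L\setminus\{\rho\}|$. A (planted, binary phylogenetic) tree $T$ over $L$ is a rooted tree whose top vertex is labeled $\rho$ and has exactly one child $r(T)$ (the root), in which every other non-leaf vertex has exactly two children, and whose leaves are bijectively labeled by $L\setminus\{\rho\}$; vertices are identified with their labels. For a vertex $v$, $T_v$ is the subtree rooted at $v$ and $cl(v)=L(T_v)$ is its cluster ($L(\cdot)$ denotes the set of labels of a tree). For $S\subseteq L$, $T(S)$ is the smallest subtree of $T$ containing all vertices labeled by $S$, and $T|_S$ is obtained from $T(S)$ by suppressing all unlabeled vertices with fewer than two children. OLA indexing. A leaf ordering is a bijection $\sigma:L\setminus\{\rho\}\to\{0,\dots,n-1\}$; write $l_i=\sigma^{-1}(i)$. For a binary tree $T$ whose non-$\rho$ labels lie in $L\setminus\{\rho\}$ and a vertex $v\ne\rho$, let $\mu(v)=\min\{\sigma(l): l\in L(T_v)\setminus\{\rho\}\}$; each leaf $l$ gets index $\sigma(l)$, and each internal vertex $v$ (not a leaf, not $\rho$) with children $v_1,v_2$ gets index $\sigma(v):=-\max\{\mu(v_1),\mu(v_2)\}$. Let $T^i:=T|_{\{\rho,l_0,\dots,l_i\}}$. Agreement forests. A forest $\mathcal F=\{C_1,\dots,C_k\}$ of trees with pairwise disjoint label sets agrees with a tree $T$ over $L$ if (i) for each $C_i$, $T|_{L(C_i)}$ is isomorphic to $C_i$ (label-preserving); (ii) the subtrees $T(L(C_i))$ are pairwise vertex-disjoint; (iii) $\bigcup_i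 L(C_i)=L$. $\mathcal F$ is an agreement forest for a set $\mathcal T$ of trees if it agrees with every $T\in\mathcal T$. The inheritance graph $G(\mathcal T,\mathcal F)$ is the directed graph on vertex set $\mathcal F$ with an edge $(C_i,C_j)$, $i\neq j$, iff some $T\in\mathcal T$ contains a directed (root-to-leaf direction) path from the root of $T(L(C_i))$ to the root of $T(L(C_j))$. $\mathcal F$ is an acyclic agreement forest (AAF) if additionally $G(\mathcal T,\mathcal F)$ has no directed cycle. *)

From mathcomp Require Import all_boot all_order all_algebra.
Set Implicit Arguments. Unset Strict Implicit. Unset Printing Implicit Defensive.
Import GRing.Theory Num.Theory.

Section Trees.
Variable L : finType.

(* Rooted binary trees with leaves labelled in L (children unordered: order of
   the two arguments of Nd is irrelevant, see [iso]). *)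
Inductive btree := Lf of L | Nd of btree & btree.

Fixpoint leaves (t : btree) : seq L :=
  match t with Lf l => [:: l] | Nd a b => leaves a ++ leaves b end.

Definition lset (t : btree) : {set L} := [set x in leaves t].

Fixpoint subtrees (t : btree) : seq btree :=
  t :: match t with Lf _ => [::] | Nd a b => subtrees a ++ subtrees b end.

Fixpoint is_subtree (x t : btree) : Prop :=
  x = t \/ match t with Lf _ => False | Nd a b => is_subtree x a \/ is_subtree x b end.

Fixpoint iso (a b : btree) : bool :=
  match a, b with
  | Lf x, Lf y => x == y
  | Nd a1 a2, Nd b1 b2 => (iso a1 b1 && iso a2 b2) || (iso a1 b2 && iso a2 b1)
  | _, _ => false
  end.

(* t|_X for a rooted tree t without rho: T(X) with suppression of unlabelled
   vertices with fewer than two children; None if X meets no leaf. *)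
Fixpoint restr (X : {set L}) (t : btree) : option btree :=
  match t with
  | Lf l => if l \in X then Some (Lf l) else None
  | Nd a b =>
      match restr X a, restr X b with
      | Some a', Some b' => Some (Nd a' b')
      | Some a', None => Some a'
      | None, r => r
      end
  end.

Variable rho : L.

(* A planted binary phylogenetic tree over L is encoded by its subtree
   below rho (rooted at r(T)); the top vertex rho is implicit. *)
Definition planted_over (t : btree) : bool :=
  uniq (leaves t) && (lset t == [set~ rho]).

(* Trees that can occur as components of a forest: the lone vertex rho,
   a planted tree (rho on top of a binary tree), or a binary tree without rho. *)
Inductive ftree := FRho | FPlant of btree | FTree of btree.

Definition flabels (f : ftree) : {set L} :=
  match f with FRho => [set rho] | FPlant t => rho |: lset t | FTree t => lset t end.

Definition fbody (f : ftree) : option btree :=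
  match f with FRho => None | FPlant t => Some t | FTree t => Some t end.

Definition fiso (f g : ftree) : bool :=
  match f, g with
  | FRho, FRho => true
  | FPlant a, FPlant b => iso a b
  | FTree a, FTree b => iso a b
  | _, _ => false
  end.

Definition prestr (S : {set L}) (t : btree) : option ftree :=
  if rho \in S then
    match restr (S :\ rho) t with None => Some FRho | Some u => Some (FPlant u) end
  else omap FTree (restr S t).

(* Vertices of the planted tree T (encoded by t) are identified with their
   clusters: rho has cluster L, every other vertex v has cluster L(T_v). *)
Definition vclusters (t : btree) : seq {set L} := [set: L] :: map lset (subtrees t).

(* v is a vertex of T(S): v is an ancestor of some element of S and a
   descendant of every common ancestor of S (i.e. of the lca). *)
Definition inTS (t : btree) (S v : {set L}) : bool :=
  (S :&: v != set0) && all (fun w : {set L} => (S \subset w) ==> (v \subset w)) (vclusters t).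

Definition rootTS (t : btree) (S v : {set L}) : bool :=
  [&& v \in vclusters t, S \subset v &
      all (fun w : {set L} => (S \subset w) ==> (v \subset w)) (vclusters t)].

Definition agrees k (C : 'I_k -> ftree) (t : btree) : Prop :=
  [/\ forall a, exists2 f, prestr (flabels (C a)) t = Some f & fiso (C a) f,
      forall a b, a != b -> forall v, v \in vclusters t ->
         ~~ (inTS t (flabels (C a)) v && inTS t (flabels (C b)) v)
    & \bigcup_(a < k) flabels (C a) = [set: L]].

Definition labels_disjoint k (C : 'I_k -> ftree) : Prop :=
  forall a b, a != b -> [disjoint flabels (C a) & flabels (C b)].

Definition agreement_forest m (T : 'I_m -> btree) k (C : 'I_k -> ftree) : Prop :=
  labels_disjoint C /\ forall p, agrees C (T p).

(* Inheritance graph G(T,F): edge (C_a,C_b), a <> b, iff some tree has a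
   directed path from the root of T(L(C_a)) to the root of T(L(C_b)). *)
Definition inh m (T : 'I_m -> btree) k (C : 'I_k -> ftree) : rel 'I_k :=
  fun a b => (a != b) && [exists p : 'I_m,
    has (fun ra : {set L} => rootTS (T p) (flabels (C a)) ra &&
      has (fun rb : {set L} => rootTS (T p) (flabels (C b)) rb && (rb \subset ra))
          (vclusters (T p))) (vclusters (T p))].

Definition acyclic k (e : rel 'I_k) : Prop :=
  forall a, ~~ [exists b, e a b && connect e b a].

Definition acyclic_agreement_forest m (T : 'I_m -> btree) k (C : 'I_k -> ftree) : Prop :=
  agreement_forest T C /\ acyclic (inh T C).

Definition topological_ordering k (e : rel 'I_k) : Prop :=
  forall a b, e a b -> (a < b)%N.

Definition leaf_ordering (sigma : L -> nat) : Prop :=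
  [/\ {in [set~ rho] &, injective sigma},
      forall l, l != rho -> (sigma l < #|L|.-1)%N
    & forall i, (i < #|L|.-1)%N -> exists2 l, l != rho & sigma l = i].

Variable sigma : L -> nat.

Fixpoint mu (t : btree) : nat :=
  match t with Lf l => sigma l | Nd a b => minn (mu a) (mu b) end.

Definition idx (t : btree) : int :=
  match t with
  | Lf l => Posz (sigma l)
  | Nd a b => (- Posz (maxn (mu a) (mu b)))%R
  end.

Definition prefix_set (j : nat) : {set L} := [set l | (l != rho) && (sigma l <= j)%N].

End Trees.

From mathcomp Require Import all_boot all_order all_algebra.
Set Implicit Arguments. Unset Strict Implicit. Unset Printing Implicit Defensive.

(* Let r be the root of T(L(C_i)).  A leaf below r lying in another component C_b
   forces b > i: the root of T(L(C_b)) is comparable with r, and lying below r it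
   gives an edge C_i -> C_b of the inheritance graph, while lying above r it makes
   r a common vertex of T(L(C_i)) and T(L(C_b)).  Leaves of later components come
   after l_j in sigma, so the restriction of T_r to {l_0,..,l_j} equals T|_Q for
   Q = {l_s,..,l_j} /\ L(C_i), which agreement makes isomorphic to C_i|_Q.  These
   subtrees are thus isomorphic across the trees; an isomorphism preserves
   clusters and OLA indices, and in a tree with distinct leaves a vertex is
   determined by its cluster. *)

Section Btree.
Variable L : finType.
Implicit Types (t u v w a b : btree L) (X Y : {set L}).

Lemma is_subtree_refl t : is_subtree t t.
Proof. by case: t => *; left. Qed.

Lemma subtree_leaves v t : is_subtree v t -> {subset leaves v <= leaves t}.
Proof.
elim: t => [l|a IHa b IHb] /=; first by case=> [->|[]].
case=> [->//|[/IHa|/IHb] H x /H]; rewrite mem_cat => ->; by rewrite ?orbT.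
Qed.

Lemma leaves_nonempty t : exists z, z \in leaves t.
Proof.
elim: t => [l|a [z Hz] b _]; first by exists l; rewrite inE.
by exists z; rewrite /= mem_cat Hz.
Qed.

Lemma lset_Nd a b : lset (Nd a b) = lset a :|: lset b.
Proof. by apply/setP => z; rewrite !inE mem_cat. Qed.

Lemma uniq_cat_disjoint (s1 s2 : seq L) z : uniq (s1 ++ s2) -> z \in s1 -> z \in s2 -> False.
Proof. by rewrite cat_uniq => /and3P[_ /hasPn H _] z1 /H; rewrite /= z1. Qed.

Lemma subtree_Nd_cross a b v w : uniq (leaves a ++ leaves b) ->
  is_subtree v a -> is_subtree w b -> ~~ (lset w \subset lset v).
Proof.
move=> U sv sw; apply/negP => /subsetP wv; have [z zw] := leaves_nonempty w.
have /wv : z \in lset w by rewrite inE.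
rewrite inE => /(subtree_leaves sv) za.
exact: (uniq_cat_disjoint U za (subtree_leaves sw zw)).
Qed.

Lemma subtree_laminar t v w x : uniq (leaves t) -> is_subtree v t -> is_subtree w t ->
  x \in leaves v -> x \in leaves w ->
  {subset leaves v <= leaves w} \/ {subset leaves w <= leaves v}.
Proof.
elim: t => [l|a IHa b IHb] /=; first by move=> _ [->|[]] [->|[]]; left.
move=> U [->|Hv] [->|Hw] xv xw.
- by left.
- by right; apply: subtree_leaves; right.
- by left; apply: subtree_leaves; right.
have [ua ub] : uniq (leaves a) /\ uniq (leaves b) by move: U; rewrite cat_uniq => /and3P[].
case: Hv Hw => Hv [] Hw.
- exact: IHa.
- by case: (uniq_cat_disjoint U (subtree_leaves Hv xv) (subtree_leaves Hw xw)).
- by case: (uniq_cat_disjoint U (subtree_leaves Hw xw) (subtree_leaves Hv xv)).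
- exact: IHb.
Qed.

Lemma subtree_lset_inj w v1 v2 : uniq (leaves w) -> is_subtree v1 w -> is_subtree v2 w ->
  lset v1 = lset v2 -> v1 = v2.
Proof.
elim: w => [l|a IHa b IHb] /=; first by move=> _ [->|[]] [->|[]].
move=> U; have U' : uniq (leaves b ++ leaves a) by rewrite uniq_catC.
have [ua ub] : uniq (leaves a) /\ uniq (leaves b) by move: U; rewrite cat_uniq => /and3P[].
have sa : is_subtree a a := is_subtree_refl a.
have sb : is_subtree b b := is_subtree_refl b.
case=> [->|[H1|H1]] [->|[H2|H2]] E //; try by [apply: IHa | apply: IHb].
- by case/negP: (subtree_Nd_cross U H2 sb); rewrite -E lset_Nd subsetUr.
- by case/negP: (subtree_Nd_cross U' H2 sa); rewrite -E lset_Nd subsetUl.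
- by case/negP: (subtree_Nd_cross U H1 sb); rewrite E lset_Nd subsetUr.
- by case/negP: (subtree_Nd_cross U H1 H2); rewrite E.
- by case/negP: (subtree_Nd_cross U' H1 sa); rewrite E lset_Nd subsetUl.
- by case/negP: (subtree_Nd_cross U H2 H1); rewrite E.
Qed.

Lemma leaves_restr X t :
  (if restr X t is Some y then leaves y else [::]) = [seq l <- leaves t | l \in X].
Proof.
elim: t => [l|a IHa b IHb] /=; first by case: (l \in X).
rewrite filter_cat -IHa -IHb.
by case: (restr X a) => [a'|]; case: (restr X b) => [b'|] //=; rewrite cats0.
Qed.

Lemma restr_Some X t l : l \in leaves t -> l \in X -> exists y, restr X t = Some y.
Proof.
move=> lt lX; have := leaves_restr X t; case: (restr X t) => [y|]; first by eauto.
move=> E; have : l \in [seq l <- leaves t | l \in X] by rewrite mem_filter lX lt.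
by rewrite -E.
Qed.

Lemma restr_uniq X t y : uniq (leaves t) -> restr X t = Some y -> uniq (leaves y).
Proof. by move=> ut E; have := leaves_restr X t; rewrite E => ->; apply: filter_uniq. Qed.

Lemma eq_restr X Y t : {in leaves t, X =i Y} -> restr X t = restr Y t.
Proof.
elim: t => [l|a IHa b IHb] /= H; first by rewrite H // inE.
by rewrite IHa ?IHb // => l hl; apply: H; rewrite mem_cat hl ?orbT.
Qed.

Lemma restr_None X t : (forall l, l \in leaves t -> l \notin X) -> restr X t = None.
Proof.
elim: t => [l|a IHa b IHb] /= H; first by rewrite (negbTE (H l _)) // inE.
by rewrite IHa ?IHb // => l hl; apply: H; rewrite mem_cat hl ?orbT.
Qed.

Lemma restr_restr X Y t : obind (restr Y) (restr X t) = restr (X :&: Y) t.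
Proof.
elim: t => [l|a IHa b IHb] /=; first by rewrite inE; case: (l \in X).
rewrite -IHa -IHb.
by case: (restr X a) => [a'|]; case: (restr X b) => [b'|] //=; case: (restr Y a').
Qed.

Lemma subtree_restr X u t y : is_subtree u t -> restr X u = Some y ->
  exists2 z, restr X t = Some z & is_subtree y z.
Proof.
elim: t => [l|a IHa b IHb] /=.
  by case=> [-> E|[]]; exists y => //; apply: is_subtree_refl.
case=> [-> E | [/IHa H /H [z -> yz] | /IHb H /H [z -> yz]]].
- by exists y => //; apply: is_subtree_refl.
- by case: (restr X b) => [b'|]; [exists (Nd z b') => //; right; left | exists z].
- by case: (restr X a) => [a'|]; [exists (Nd a' z) => //; right; right | exists z].
Qed.

Lemma restr_subtree X u t : uniq (leaves t) -> is_subtree u t ->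
  {subset X <= leaves u} -> restr X t = restr X u.
Proof.
elim: t => [l|a IHa b IHb] /=; first by move=> _ [->|[]].
move=> U [->//|[Hu|Hu]] Xu.
- have ua : uniq (leaves a) by move: U; rewrite cat_uniq => /and3P[].
  rewrite (@restr_None X b) -?(IHa ua Hu) //; first by case: (restr X a).
  move=> l lb; apply/negP => /Xu lu.
  exact: (uniq_cat_disjoint U (subtree_leaves Hu lu) lb).
- have ub : uniq (leaves b) by move: U; rewrite cat_uniq => /and3P[].
  rewrite (@restr_None X a) -?(IHb ub Hu) // => l la; apply/negP => /Xu lu.
  exact: (uniq_cat_disjoint U la (subtree_leaves Hu lu)).
Qed.

Lemma iso_sym a b : iso a b -> iso b a.
Proof.
elim: a b => [l|a1 IH1 a2 IH2] [l'|b1 b2] //=; first by rewrite eq_sym.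
by case/orP=> /andP[h1 h2]; apply/orP; [left|right]; apply/andP; split; auto.
Qed.

Lemma iso_trans a b c : iso a b -> iso b c -> iso a c.
Proof.
elim: a b c => [l|a1 IH1 a2 IH2] [l'|b1 b2] [l''|c1 c2] //=; first by move=> /eqP-> /eqP->.
case/orP=> /andP[h1 h2]; case/orP=> /andP[h3 h4]; apply/orP;
  [left|right|right|left]; apply/andP; split; eauto.
Qed.

Lemma iso_lset a b : iso a b -> lset a = lset b.
Proof.
elim: a b => [l|a1 IH1 a2 IH2] [l'|b1 b2] //=; first by move=> /eqP->.
by case/orP=> /andP[/IH1 h1 /IH2 h2]; rewrite !lset_Nd h1 h2 // setUC.
Qed.

Lemma iso_subtree w w' v' : iso w w' -> is_subtree v' w' -> exists2 v, is_subtree v w & iso v v'.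
Proof.
elim: w w' v' => [l|a IHa b IHb] [l'|a' b'] v' //=.
  by move=> H [->|[]]; exists (Lf l) => //; left.
move=> H [->|[Hv|Hv]]; first by exists (Nd a b) => //; left.
- case/orP: H => /andP[h1 h2].
  + by have [v sv iv] := IHa _ _ h1 Hv; exists v => //; right; left.
  + by have [v sv iv] := IHb _ _ h2 Hv; exists v => //; right; right.
- case/orP: H => /andP[h1 h2].
  + by have [v sv iv] := IHb _ _ h2 Hv; exists v => //; right; right.
  + by have [v sv iv] := IHa _ _ h1 Hv; exists v => //; right; left.
Qed.

Definition oiso (x y : option (btree L)) : bool :=
  match x, y with Some a, Some b => iso a b | None, None => true | _, _ => false end.

Lemma iso_restr X a b : iso a b -> oiso (restr X a) (restr X b).
Proof.
elim: a b => [l|a1 IH1 a2 IH2] [l'|b1 b2] //=.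
  by move=> /eqP->; case: (l' \in X) => //=; rewrite eqxx.
case/orP=> /andP[/(IH1 _) h1 /(IH2 _) h2].
  move: h1 h2; case: (restr X a1) (restr X b1) => [x1|] [y1|] //=;
  case: (restr X a2) (restr X b2) => [x2|] [y2|] //= h1 h2; by rewrite h1 h2.
move: h1 h2; case: (restr X a1) (restr X b2) => [x1|] [y1|] //=;
case: (restr X a2) (restr X b1) => [x2|] [y2|] //= h1 h2; by rewrite h1 h2 ?orbT.
Qed.

Variable sigma : L -> nat.

Lemma iso_mu a b : iso a b -> mu sigma a = mu sigma b.
Proof.
elim: a b => [l|a1 IH1 a2 IH2] [l'|b1 b2] //=; first by move=> /eqP->.
by case/orP=> /andP[/IH1-> /IH2->] //; apply: minnC.
Qed.

Lemma iso_idx a b : iso a b -> idx sigma a = idx sigma b.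
Proof.
case: a b => [l|a1 a2] [l'|b1 b2] //=; first by move=> /eqP->.
by case/orP=> /andP[/iso_mu-> /iso_mu->] //; rewrite maxnC.
Qed.

Lemma iso_subtree_idx a b v v' : iso a b -> uniq (leaves a) ->
  is_subtree v a -> is_subtree v' b -> lset v = lset v' -> idx sigma v = idx sigma v'.
Proof.
move=> iab ua sv sv' E; have [w sw iw] := iso_subtree iab sv'.
have -> : v = w by apply: (subtree_lset_inj ua sv sw); rewrite (iso_lset iw).
exact: iso_idx.
Qed.

End Btree.

Lemma mem_lset_subtrees (L : finType) (t : btree L) r :
  r \in map (@lset L) (subtrees t) -> exists2 u, is_subtree u t & r = lset u.
Proof.
elim: t => [l|a IHa b IHb] /=; first by rewrite inE => /eqP->; exists (Lf l) => //; left.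
rewrite inE map_cat mem_cat => /orP[/eqP->|/orP[/IHa|/IHb] [u su ->]].
- by exists (Nd a b) => //; left.
- by exists u => //; right; left.
- by exists u => //; right; right.
Qed.

Section Planted.
Variables (L : finType) (rho : L).
Implicit Types (t : btree L) (S : {set L}).

Lemma vclusters_subtree t r : planted_over rho t -> r \in vclusters t ->
  exists2 u, is_subtree u t & lset u = r :\ rho.
Proof.
case/andP=> _ /eqP lt; rewrite inE => /orP[/eqP->|/mem_lset_subtrees[u su ->]].
  by exists t; [apply: is_subtree_refl | rewrite lt setTD].
exists u => //; apply/setP => z; rewrite !inE; case: eqVneq => [->|//] /=.
apply/negbTE/negP => /(subtree_leaves su) rt.
have : rho \in lset t by rewrite inE.
by rewrite lt !inE eqxx.
Qed.

Lemma vclusters_laminar t (v w : {set L}) x : uniq (leaves t) ->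
  v \in vclusters t -> w \in vclusters t -> x \in v -> x \in w -> (v \subset w) || (w \subset v).
Proof.
move=> U; rewrite !inE => /orP[/eqP->|/mem_lset_subtrees[v' sv ->]].
  by rewrite subsetT orbT.
case/orP=> [/eqP->|/mem_lset_subtrees[w' sw ->]]; first by rewrite subsetT.
rewrite !inE => xv xw.
by case: (subtree_laminar U sv sw xv xw) => H; apply/orP; [left|right];
  apply/subsetP => z; rewrite !inE; apply: H.
Qed.

Lemma rootTS_exists t S : uniq (leaves t) -> S != set0 -> exists r, rootTS t S r.
Proof.
move=> U /set0Pn[x xS].
pose above w := (w \in vclusters t) && (S \subset w).
have [|w0 /andP[w0v Sw0] minw0] := @arg_minnP _ [set: L] above (fun w => #|w|).
  by rewrite /above !inE eqxx subsetT.
exists w0; rewrite /rootTS w0v Sw0; apply/allP => w wv; apply/implyP => Sw.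
have /orP[//|ww0] := vclusters_laminar U w0v wv (subsetP Sw0 x xS) (subsetP Sw x xS).
have /eqP-> : w == w0 by rewrite eqEcard ww0 minw0 // /above wv.
exact: subxx.
Qed.

Lemma flabels_neq0 (c : ftree L) : flabels rho c != set0.
Proof.
apply/set0Pn; case: c => [|b|b] /=; try by exists rho; rewrite !inE eqxx.
by have [z zb] := leaves_nonempty b; exists z; rewrite inE.
Qed.

End Planted.

Lemma prestr_restr (L : finType) (rho : L) (c : ftree L) (t : btree L) (f : ftree L)
    (X : {set L}) :
  prestr rho (flabels rho c) t = Some f -> fiso c f -> X \subset flabels rho c :\ rho ->
  oiso (restr X t) (obind (restr X) (fbody c)).
Proof.
have restr_iso B b u : restr B t = Some u -> iso b u -> X \subset B -> oiso (restr X t) (restr X b).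
  by move=> Eu ibu /setIidPr XB; rewrite -{1}XB -restr_restr Eu; apply: iso_restr (iso_sym ibu).
rewrite /prestr; case: c => [|b|b] /=.
- rewrite setDv subset0 => _ _ /eqP->.
  by rewrite restr_None // => l _; rewrite inE.
- rewrite setU11; case E: restr => [u|] [<-] //=; exact: restr_iso.
- case: (boolP (rho \in lset b)) => [_|rb]; first by case: restr => [?|] [<-].
  case E: restr => [u|] //= [<-] /= ibu XB; apply: restr_iso E ibu _.
  exact: subset_trans XB (subsetDl _ _).
Qed.

Section Component.
Variables (L : finType) (rho : L) (m : nat) (T : 'I_m -> btree L) (k : nat) (C : 'I_k -> ftree L).
Hypothesis topo : topological_ordering (inh rho T C).
Variable p : 'I_m.
Hypotheses (planted : planted_over rho (T p)) (agr : agrees rho C (T p)).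

Lemma below_root_later (i b : 'I_k) r l : rootTS (T p) (flabels rho (C i)) r ->
  l \in r -> l \in flabels rho (C b) -> b != i -> (i < b)%N.
Proof.
case: agr => _ disj _; case/andP: planted => ut _.
move=> Hr lr lb bi; have /and3P[rv Sr rmin] := Hr.
have [rb Hrb] := rootTS_exists ut (flabels_neq0 rho (C b)).
have /and3P[rbv Srb /allP rbmin] := Hrb.
case/orP: (vclusters_laminar ut rbv rv (subsetP Srb l lb) lr) => [rbr|rrb].
  apply: topo; rewrite /inh eq_sym bi; apply/existsP; exists p.
  by apply/hasP; exists r; rewrite // Hr; apply/hasP; exists rb; rewrite // Hrb rbr.
have ib : i != b by rewrite eq_sym.
case/negP: (disj i b ib r rv); rewrite /inTS.
rewrite (setIidPl Sr) flabels_neq0; apply/and3P; split.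
- exact: rmin.
- by apply/set0Pn; exists l; rewrite inE lb lr.
- apply/allP => w wv; apply/implyP => Sw; exact: subset_trans rrb (implyP (rbmin w wv) Sw).
Qed.

Variables (sigma : L -> nat) (i : 'I_k) (ls lj : L).
Hypothesis sigma_ordered : forall a b : 'I_k, (a < b)%N -> forall l l',
  l \in flabels rho (C a) :\ rho -> l' \in flabels rho (C b) :\ rho -> (sigma l < sigma l')%N.
Hypothesis ls_first : forall l, l \in flabels rho (C i) :\ rho -> (sigma ls <= sigma l)%N.
Hypotheses (lj_in : lj \in flabels rho (C i)) (lj_neq : lj != rho) (ls_le_lj : (sigma ls <= sigma lj)%N).

Let P := prefix_set rho sigma (sigma lj).
Let Q := [set l in flabels rho (C i) | (l != rho) && (sigma ls <= sigma l <= sigma lj)%N].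

Lemma restr_component_prefix :
  exists2 y, restr Q (T p) = Some y & exists2 Tj, restr P (T p) = Some Tj & is_subtree y Tj.
Proof.
case/andP: (planted) => ut _; case: (agr) => _ _ cover.
have [r Hr] := rootTS_exists ut (flabels_neq0 rho (C i)).
have /and3P[rv Sr _] := Hr.
have [u su lu] := vclusters_subtree planted rv.
have leaves_u l : (l \in leaves u) = (l != rho) && (l \in r).
  by have := in_set (mem (leaves u)) l; rewrite -/(lset u) lu !inE => <-.
have Qu : {subset Q <= leaves u}.
  by move=> l; rewrite leaves_u !inE => /and3P[/(subsetP Sr) -> -> _].
have PQ : {in leaves u, P =i Q}.
  move=> l; rewrite leaves_u !inE => /andP[lr l_r]; rewrite lr /=.
  apply/idP/idP => [l_lj|/andP[_ /andP[_ ->]] //]; rewrite l_lj andbT.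
  have /bigcupP[b _ lb] : l \in \bigcup_(a < k) flabels rho (C a) by rewrite cover inE.
  have [bi|bi] := eqVneq b i; first by rewrite -bi lb ls_first // !inE lr -bi.
  have := sigma_ordered (below_root_later Hr l_r lb bi) (l := lj) (l' := l).
  by rewrite !inE lj_neq lj_in lr lb ltnNge l_lj => /(_ isT isT).
have lj_u : lj \in leaves u by apply: Qu; rewrite !inE lj_in lj_neq ls_le_lj leqnn.
have lj_P : lj \in P by rewrite !inE lj_neq leqnn.
have [y Ey] := restr_Some lj_u lj_P.
exists y; last exact: subtree_restr su Ey.
by rewrite (restr_subtree ut su Qu) -Ey; apply/esym/eq_restr.
Qed.

End Component.

Theorem lemma1 (L : finType) (rho : L) (m : nat) (T : 'I_m -> btree L)
    (k : nat) (C : 'I_k -> ftree L) (sigma : L -> nat) (i : 'I_k) (ls lj : L) :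
  (2 <= m)%N ->
  (forall p, planted_over rho (T p)) ->
  acyclic_agreement_forest rho T C ->
  topological_ordering (inh rho T C) ->
  leaf_ordering rho sigma ->
  (forall a b : 'I_k, (a < b)%N -> forall l l',
      l \in flabels rho (C a) :\ rho -> l' \in flabels rho (C b) :\ rho ->
      (sigma l < sigma l')%N) ->
  flabels rho (C i) :\ rho != set0 ->
  ls \in flabels rho (C i) :\ rho ->
  (forall l, l \in flabels rho (C i) :\ rho -> (sigma ls <= sigma l)%N) ->
  lj \in flabels rho (C i) -> lj != rho -> (sigma ls <= sigma lj)%N ->
  exists x : 'I_m -> btree L,
    (forall p, exists2 Tj, restr (prefix_set rho sigma (sigma lj)) (T p) = Some Tj &
       is_subtree (x p) Tj /\
       exists2 Ci, obind (restr [set l in flabels rho (C i) |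
                                  (l != rho) && (sigma ls <= sigma l <= sigma lj)%N])
                         (fbody (C i)) = Some Ci
                 & iso (x p) Ci) /\
    (forall (p p' : 'I_m) (v v' : btree L),
       is_subtree v (x p) -> is_subtree v' (x p') -> lset v = lset v' ->
       idx sigma v = idx sigma v').
Proof.
move=> _ planted [[_ agr] _] topo _ ordered _ _ ls_first lj_in lj_neq ls_le_lj.
set Q := [set l in _ | _].
have QC : Q \subset flabels rho (C i) :\ rho by apply/subsetP => l; rewrite !inE => /and3P[-> -> _].
pose x p := odflt (Lf lj) (restr Q (T p)).
have restrQ p := restr_component_prefix topo (planted p) (agr p) ordered ls_first lj_in lj_neq ls_le_lj.
have Ex p : restr Q (T p) = Some (x p) by rewrite /x; case: (restrQ p) => y ->.
have isoC p : exists2 Ci, obind (restr Q) (fbody (C i)) = Some Ci & iso (x p) Ci.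
  case: (agr p) => /(_ i) [f Ef iCf] _ _.
  by have := prestr_restr Ef iCf QC; rewrite Ex; case: obind => // Ci; exists Ci.
exists x; split=> [p | p p' v v' sv sv' Evv'].
  have [y Ey [Tj ETj yTj]] := restrQ p; exists Tj => //; split; last exact: isoC.
  by rewrite /x Ey.
have [Ci ECi ipC] := isoC p; have [Ci' ECi' ip'C] := isoC p'.
move: ECi'; rewrite ECi => -[ECiCi']; rewrite -ECiCi' in ip'C.
apply: iso_subtree_idx (iso_trans ipC (iso_sym ip'C)) _ sv sv' Evv'.
by apply: restr_uniq (Ex p); case/andP: (planted p).
Qed.
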